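(* Let $(a_0,\ldots,a_n)$ be a finite sequence of positive integers. For every $\varepsilon>0$ there is $m_0>0$ such that for every integer $m\ge m_0$ and every positive integer $N$, $$|\Phi^-(\beta^N)-\Phi^-(\beta^1)|<\frac{\varepsilon}{4},$$ where $\beta^N=\beta^N_m$ is as defined in the context.
   Context: For positive integers $d_0,d_1,\ldots$, $[d_0,d_1,d_2,\ldots]$ denotes the continued fraction $\cfrac{1}{d_0+\cfrac{1}{d_1+\cfrac{1}{d_2+\cdots}}}$, and for $\beta=[d_0,d_1,\ldots]$ we write $\alpha_j(\beta)=[d_j,d_{j+1},\ldots]$. $\Phi(\beta)=\sum_{k\ge 0}\alpha_0(\beta)\cdots\alpha_{k-1}(\beta)\log\frac{1}{\alpha_k(\beta)}$ is the Yoccoz Brjuno function. For integers $m\ge1$, $N\ge1$, $\beta^N$ is the number whose digits (indexed from $0$) are $a_0,\ldots,a_n$ in positions $0,\ldots,n$, $N$ in position $n+m$, and $1$ in all other positions (so $\beta^1=[a_0,\ldots,a_n,1,1,\ldots]$). For such $\beta$ (with $m$ fixed), $\Phi^-(\beta)=\Phi(\beta)-\alpha_0(\beta)\alpha_1(\beta)\cdots\alpha_{n+m-1}(\beta)\log\frac{1}{\alpha_{n+m}(\beta)}$. *)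

From Stdlib Require Import Reals Lra Lia.
From Coquelicot Require Import Coquelicot.
Open Scope R_scope.

(* A continued fraction is given by its digit sequence d : nat -> nat
   (digits assumed positive where used). *)

Fixpoint fcf (d : nat -> nat) (k : nat) : R :=
  match k with
  | O => / INR (d O)
  | S k' => / (INR (d O) + fcf (fun i => d (S i)) k')
  end.

Definition cfval (d : nat -> nat) : R := real (Lim_seq (fun k => fcf d k)).

Definition alpha (d : nat -> nat) (j : nat) : R := cfval (fun i => d (i + j)%nat).

Fixpoint alpha_prod (d : nat -> nat) (k : nat) : R :=
  match k with
  | O => 1
  | S k' => alpha_prod d k' * alpha d k'
  end.

Definition Phi (d : nat -> nat) : R :=
  Series (fun k => alpha_prod d k * ln (/ alpha d k)).

Definition PhiMinus (p : nat) (d : nat -> nat) : R :=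
  Phi d - alpha_prod d p * ln (/ alpha d p).

Definition betaN (a : nat -> nat) (n m N : nat) : nat -> nat :=
  fun i => if Nat.leb i n then a i
           else if Nat.eqb i (n + m) then N else 1%nat.

From Stdlib Require Import Reals Lra Lia FunctionalExtensionality.
From Coquelicot Require Import Coquelicot.
Open Scope R_scope.

(* Two continued fractions with positive digits agreeing on [j, j + 2L) have
   alpha_j within 4^-L of each other, since two steps of the Gauss map contract
   by a factor 4.  Moreover alpha_j alpha_(j+1) <= 1/2, so the k-th Brjuno term
   alpha_0 ... alpha_(k-1) log (1/alpha_k) is at most (4/3) (3/4)^k d_k.
   Phi^- removes the term of index n + m, the only digit where beta^N and beta^1
   differ.  The terms of index k <= K therefore differ by O(4^-J) once
   m > K + 2J, while for n < k <> n + m both digits are 1 and each term is at most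
   (4/3) (3/4)^k: the tail beyond K is small uniformly in N. *)

Definition positive_digits (d : nat -> nat) : Prop := forall i, (1 <= d i)%nat.

Lemma positive_digits_shift (d : nat -> nat) (j : nat) :
  positive_digits d -> positive_digits (fun i => d (i + j)%nat).
Proof. intros Hd i; apply Hd. Qed.

Lemma INR_ge_1 (k : nat) : (1 <= k)%nat -> 1 <= INR k.
Proof. intro Hk; apply (le_INR 1) in Hk; simpl in Hk; lra. Qed.

Lemma ln_le_sub_1 (x : R) : 0 < x -> ln x <= x - 1.
Proof. intro Hx; pose proof (exp_ineq1_le (ln x)); rewrite exp_ln in *; lra. Qed.

Lemma inv_add_inv_add_contraction (a b z z' : R) :
  1 <= a -> 1 <= b -> 0 < z <= 1 -> 0 < z' <= 1 ->
  Rabs (/ (a + / (b + z)) - / (a + / (b + z'))) <= Rabs (z - z') / 4.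
Proof.
  intros Ha Hb Hz Hz'.
  assert (Hq : 4 <= (a * (b + z) + 1) * (a * (b + z') + 1)).
  { replace 4 with (2 * 2) by lra; apply Rmult_le_compat; nra. }
  replace (/ (a + / (b + z)) - / (a + / (b + z')))
    with ((z - z') / ((a * (b + z) + 1) * (a * (b + z') + 1)))
    by (field; repeat split; nra).
  unfold Rdiv; rewrite Rabs_mult, Rabs_inv, (Rabs_right (_ * _)) by lra.
  apply Rmult_le_compat_l; [apply Rabs_pos | apply Rinv_le_contravar; lra].
Qed.

Lemma fcf_bounds (d : nat -> nat) (k : nat) :
  positive_digits d -> / (INR (d O) + 1) <= fcf d k <= 1.
Proof.
  revert d; induction k as [|k IH]; intros d Hd; simpl;
    pose proof (INR_ge_1 _ (Hd O)).
  - split; [apply Rinv_le_contravar | rewrite <- Rinv_1; apply Rinv_le_contravar]; lra.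
  - assert (Hk : / (INR (d 1%nat) + 1) <= fcf (fun i => d (S i)) k <= 1)
      by (apply (IH (fun i => d (S i))); intro; apply Hd).
    assert (0 < / (INR (d 1%nat) + 1))
      by (apply Rinv_0_lt_compat; pose proof (pos_INR (d 1%nat)); lra).
    split; [apply Rinv_le_contravar | rewrite <- Rinv_1; apply Rinv_le_contravar]; lra.
Qed.

Lemma fcf_pos (d : nat -> nat) (k : nat) : positive_digits d -> 0 < fcf d k.
Proof.
  intro Hd; pose proof (fcf_bounds d k Hd); pose proof (pos_INR (d O)).
  assert (0 < / (INR (d O) + 1)) by (apply Rinv_0_lt_compat; lra); lra.
Qed.

Lemma fcf_close (L : nat) (d e : nat -> nat) (k k' : nat) :
  positive_digits d -> positive_digits e ->
  (forall i, (i < 2 * L)%nat -> d i = e i) ->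
  (2 * L <= k)%nat -> (2 * L <= k')%nat ->
  Rabs (fcf d k - fcf e k') <= (/ 4) ^ L.
Proof.
  revert d e k k'; induction L as [|L IH]; intros d e k k' Hd He Hde Hk Hk'.
  - pose proof (fcf_bounds d k Hd); pose proof (fcf_pos d k Hd).
    pose proof (fcf_bounds e k' He); pose proof (fcf_pos e k' He).
    simpl; apply Rabs_le; lra.
  - destruct k as [|[|j]]; [lia | lia |]; destruct k' as [|[|j']]; [lia | lia |].
    simpl fcf; rewrite <- (Hde O), <- (Hde 1%nat) by lia.
    assert (Hd2 : positive_digits (fun i => d (S (S i)))) by (intro; apply Hd).
    assert (He2 : positive_digits (fun i => e (S (S i)))) by (intro; apply He).
    pose proof (fcf_bounds _ j Hd2); pose proof (fcf_pos _ j Hd2).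
    pose proof (fcf_bounds _ j' He2); pose proof (fcf_pos _ j' He2).
    eapply Rle_trans.
    { apply inv_add_inv_add_contraction; try apply INR_ge_1, Hd; lra. }
    assert (Rabs (fcf (fun i => d (S (S i))) j - fcf (fun i => e (S (S i))) j')
              <= (/ 4) ^ L)
      by (apply IH; [exact Hd2 | exact He2 | intros i Hi; apply Hde | |]; lia).
    simpl; lra.
Qed.

Lemma cfval_is_lim (d : nat -> nat) :
  positive_digits d -> is_lim_seq (fcf d) (cfval d).
Proof.
  intro Hd.
  assert (Hcauchy : ex_finite_lim_seq (fcf d)).
  { apply ex_lim_seq_cauchy_corr; intro eps.
    destruct (pow_lt_1_zero (/ 4) ltac:(rewrite Rabs_right; lra) eps (cond_pos eps))
      as [L HL].
    exists (2 * L)%nat; intros k k' Hk Hk'.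
    eapply Rle_lt_trans; [apply (fcf_close L); auto |].
    specialize (HL L (le_n _)); rewrite Rabs_right in HL; [exact HL |].
    apply Rle_ge, pow_le; lra. }
  destruct Hcauchy as [l Hl].
  unfold cfval; change (fun k => fcf d k) with (fcf d).
  rewrite (is_lim_seq_unique _ _ Hl); exact Hl.
Qed.

Lemma cfval_bounds (d : nat -> nat) :
  positive_digits d -> / (INR (d O) + 1) <= cfval d <= 1.
Proof.
  intro Hd; pose proof (cfval_is_lim d Hd) as Hlim; split.
  - change (Rbar_le (/ (INR (d O) + 1)) (cfval d)).
    apply (is_lim_seq_le (fun _ => / (INR (d O) + 1)) (fcf d)); auto.
    + intro k; apply fcf_bounds, Hd.
    + apply is_lim_seq_const.
  - change (Rbar_le (cfval d) 1).
    apply (is_lim_seq_le (fcf d) (fun _ => 1)); auto.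
    + intro k; apply fcf_bounds, Hd.
    + apply is_lim_seq_const.
Qed.

Lemma cfval_close (L : nat) (d e : nat -> nat) :
  positive_digits d -> positive_digits e ->
  (forall i, (i < 2 * L)%nat -> d i = e i) ->
  Rabs (cfval d - cfval e) <= (/ 4) ^ L.
Proof.
  intros Hd He Hde.
  change (Rbar_le (Rabs (cfval d - cfval e)) ((/ 4) ^ L)).
  apply (is_lim_seq_le_loc (fun k => Rabs (fcf d k - fcf e k)) (fun _ => (/ 4) ^ L)).
  - exists (2 * L)%nat; intros k Hk; apply fcf_close; auto.
  - apply (is_lim_seq_abs _ (cfval d - cfval e)).
    apply is_lim_seq_minus'; apply cfval_is_lim; auto.
  - apply is_lim_seq_const.
Qed.

Lemma cfval_rec (d : nat -> nat) :
  positive_digits d -> cfval d = / (INR (d O) + cfval (fun i => d (S i))).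
Proof.
  intro Hd.
  assert (Hd1 : positive_digits (fun i => d (S i))) by (intro; apply Hd).
  pose proof (cfval_bounds _ Hd1); pose proof (INR_ge_1 _ (Hd O)).
  assert (0 < / (INR (d 1%nat) + 1))
    by (apply Rinv_0_lt_compat; pose proof (pos_INR (d 1%nat)); lra).
  assert (Hlim : is_lim_seq (fun k => fcf d (S k))
                   (/ (INR (d O) + cfval (fun i => d (S i))))).
  { apply (is_lim_seq_inv _ (INR (d O) + cfval (fun i => d (S i)))).
    - apply is_lim_seq_plus'; [apply is_lim_seq_const | apply cfval_is_lim, Hd1].
    - intro E; injection E; simpl in *; lra. }
  apply is_lim_seq_incr_1 in Hlim.
  apply is_lim_seq_unique in Hlim.
  pose proof (is_lim_seq_unique _ _ (cfval_is_lim d Hd)) as Hval.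
  rewrite Hval in Hlim; injection Hlim; auto.
Qed.

Section Alpha.

Variable d : nat -> nat.
Hypothesis Hd : positive_digits d.

Lemma alpha_rec (j : nat) : alpha d j = / (INR (d j) + alpha d (S j)).
Proof.
  unfold alpha; rewrite cfval_rec by (apply positive_digits_shift, Hd); simpl.
  do 3 f_equal; apply functional_extensionality; intro i; f_equal; lia.
Qed.

Lemma alpha_bounds (j : nat) : / (INR (d j) + 1) <= alpha d j <= 1.
Proof. exact (cfval_bounds _ (positive_digits_shift d j Hd)). Qed.

Lemma alpha_pos (j : nat) : 0 < alpha d j.
Proof.
  pose proof (alpha_bounds j); pose proof (pos_INR (d j)).
  assert (0 < / (INR (d j) + 1)) by (apply Rinv_0_lt_compat; lra); lra.
Qed.

Lemma alpha_mul_succ_le (j : nat) : alpha d j * alpha d (S j) <= / 2.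
Proof.
  rewrite (alpha_rec j).
  pose proof (alpha_bounds (S j)); pose proof (alpha_pos (S j)).
  pose proof (INR_ge_1 _ (Hd j)).
  set (y := alpha d (S j)) in *.
  replace (/ (INR (d j) + y) * y) with (y / (INR (d j) + y)) by (field; lra).
  apply Rmult_le_reg_r with (INR (d j) + y); [lra |].
  unfold Rdiv; rewrite Rmult_assoc, Rinv_l by lra; nra.
Qed.

Lemma alpha_prod_bounds (k : nat) : 0 <= alpha_prod d k <= 1.
Proof.
  induction k as [|k IH]; simpl; [lra |].
  pose proof (alpha_bounds k); pose proof (alpha_pos k); nra.
Qed.

(* Consecutive factors multiply to at most 1/2, and (3/4)^2 > 1/2. *)
Lemma alpha_prod_decay (k : nat) : alpha_prod d k <= 4 / 3 * (3 / 4) ^ k.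
Proof.
  enough (H : alpha_prod d k <= 4 / 3 * (3 / 4) ^ k /\
              alpha_prod d (S k) <= 4 / 3 * (3 / 4) ^ S k) by apply H.
  induction k as [|k [IH1 IH2]].
  - simpl; pose proof (alpha_bounds O); lra.
  - split; [exact IH2 |].
    change (alpha_prod d (S (S k))) with (alpha_prod d k * alpha d k * alpha d (S k)).
    pose proof (alpha_mul_succ_le k); pose proof (alpha_prod_bounds k).
    assert (0 <= (3 / 4) ^ k) by (apply pow_le; lra).
    rewrite Rmult_assoc; simpl; nra.
Qed.

Lemma ln_inv_alpha_bounds (k : nat) : 0 <= ln (/ alpha d k) <= INR (d k).
Proof.
  pose proof (alpha_bounds k); pose proof (alpha_pos k).
  pose proof (alpha_bounds (S k)); pose proof (alpha_pos (S k)).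
  assert (1 <= / alpha d k) by (rewrite <- Rinv_1; apply Rinv_le_contravar; lra).
  split; [rewrite <- ln_1; apply ln_le; lra |].
  eapply Rle_trans; [apply ln_le_sub_1; lra |].
  rewrite (alpha_rec k) at 1; rewrite Rinv_inv; lra.
Qed.

End Alpha.

Lemma alpha_close (L j : nat) (d e : nat -> nat) :
  positive_digits d -> positive_digits e ->
  (forall i, (j <= i < j + 2 * L)%nat -> d i = e i) ->
  Rabs (alpha d j - alpha e j) <= (/ 4) ^ L.
Proof.
  intros Hd He Hde; apply cfval_close; try apply positive_digits_shift; auto.
  intros i Hi; apply Hde; lia.
Qed.

Lemma alpha_prod_close (d e : nat -> nat) (k : nat) (eta : R) :
  positive_digits d -> positive_digits e ->
  (forall i, (i < k)%nat -> Rabs (alpha d i - alpha e i) <= eta) ->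
  Rabs (alpha_prod d k - alpha_prod e k) <= INR k * eta.
Proof.
  intros Hd He; induction k as [|k IH]; intro Hclose.
  - simpl; rewrite Rminus_diag, Rabs_R0; lra.
  - simpl alpha_prod; rewrite S_INR.
    assert (IHk : Rabs (alpha_prod d k - alpha_prod e k) <= INR k * eta)
      by (apply IH; intros; apply Hclose; lia).
    specialize (Hclose k ltac:(lia)).
    pose proof (alpha_bounds d Hd k); pose proof (alpha_pos d Hd k).
    pose proof (alpha_prod_bounds e He k).
    replace (alpha_prod d k * alpha d k - alpha_prod e k * alpha e k) with
      ((alpha_prod d k - alpha_prod e k) * alpha d k
       + alpha_prod e k * (alpha d k - alpha e k)) by ring.
    eapply Rle_trans; [apply Rabs_triang |].
    rewrite !Rabs_mult, (Rabs_right (alpha d k)), (Rabs_right (alpha_prod e k)) by lra.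
    pose proof (Rabs_pos (alpha_prod d k - alpha_prod e k)).
    pose proof (Rabs_pos (alpha d k - alpha e k)).
    nra.
Qed.

Lemma ln_inv_lipschitz (c x y : R) :
  0 < c -> c <= x -> c <= y -> Rabs (ln (/ x) - ln (/ y)) <= Rabs (x - y) / c.
Proof.
  assert (Hle : forall u v, 0 < c -> c <= u -> u <= v ->
            Rabs (ln (/ u) - ln (/ v)) <= Rabs (u - v) / c).
  { intros u v Hc Hu Huv.
    assert (1 <= v / u) by (apply Rmult_le_reg_r with u; unfold Rdiv;
                            [lra | rewrite Rmult_assoc, Rinv_l; lra]).
    rewrite !ln_Rinv by lra.
    replace (- ln u - - ln v) with (ln (v / u)) by (rewrite ln_div by lra; ring).
    assert (0 <= ln (v / u)) by (rewrite <- ln_1; apply ln_le; lra).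
    rewrite Rabs_right, Rabs_left1 by lra.
    eapply Rle_trans; [apply ln_le_sub_1; lra |].
    replace (v / u - 1) with ((v - u) * / u) by (field; lra).
    unfold Rdiv; apply Rmult_le_compat; try apply Rinv_le_contravar;
      try apply Rlt_le, Rinv_0_lt_compat; lra. }
  intros Hc Hx Hy; destruct (Rle_dec x y); [apply Hle; auto |].
  rewrite Rabs_minus_sym, (Rabs_minus_sym x); apply Hle; lra.
Qed.

Definition brjuno_term (d : nat -> nat) (k : nat) : R :=
  alpha_prod d k * ln (/ alpha d k).

Lemma brjuno_term_bounds (d : nat -> nat) (k : nat) :
  positive_digits d -> 0 <= brjuno_term d k <= 4 / 3 * (3 / 4) ^ k * INR (d k).
Proof.
  intro Hd; unfold brjuno_term.
  pose proof (ln_inv_alpha_bounds d Hd k); pose proof (alpha_prod_bounds d Hd k).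
  pose proof (alpha_prod_decay d Hd k).
  split; [nra | apply Rmult_le_compat; lra].
Qed.

Lemma ex_series_brjuno_term (d : nat -> nat) (B : nat) :
  positive_digits d -> (forall i, (d i <= B)%nat) -> ex_series (brjuno_term d).
Proof.
  intros Hd HB.
  apply (ex_series_le (V := R_CompleteNormedModule) _ (fun k => 4 / 3 * INR B * (3 / 4) ^ k)).
  - intro k; change (norm (brjuno_term d k)) with (Rabs (brjuno_term d k)).
    pose proof (brjuno_term_bounds d k Hd); pose proof (le_INR _ _ (HB k)).
    assert (0 <= (3 / 4) ^ k) by (apply pow_le; lra).
    rewrite Rabs_right by lra; nra.
  - apply (ex_series_scal_l (V := R_NormedModule)), ex_series_geom.
    rewrite Rabs_right; lra.
Qed.

Lemma brjuno_term_close (d e : nat -> nat) (k L : nat) :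
  positive_digits d -> positive_digits e ->
  (forall i, (i <= k + 2 * L)%nat -> d i = e i) ->
  Rabs (brjuno_term d k - brjuno_term e k)
    <= (INR k * INR (d k) + INR (d k) + 1) * (/ 4) ^ L.
Proof.
  intros Hd He Hde; set (eta := (/ 4) ^ L).
  assert (Heta : 0 <= eta) by (apply pow_le; lra).
  assert (Halpha : forall i, (i <= k)%nat -> Rabs (alpha d i - alpha e i) <= eta)
    by (intros i Hi; apply alpha_close; auto; intros i' Hi'; apply Hde; lia).
  assert (Hprod : Rabs (alpha_prod d k - alpha_prod e k) <= INR k * eta)
    by (apply alpha_prod_close; auto; intros i Hi; apply Halpha; lia).
  assert (Hln : Rabs (ln (/ alpha d k) - ln (/ alpha e k)) <= eta * (INR (d k) + 1)).
  { pose proof (alpha_bounds d Hd k); pose proof (alpha_bounds e He k).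
    rewrite <- (Hde k) in * by lia.
    assert (Hc : 0 < / (INR (d k) + 1))
      by (apply Rinv_0_lt_compat; pose proof (pos_INR (d k)); lra).
    eapply Rle_trans; [apply (ln_inv_lipschitz _ _ _ Hc); lra |].
    unfold Rdiv; rewrite Rinv_inv.
    apply Rmult_le_compat_r; [pose proof (pos_INR (d k)); lra | apply Halpha; lia]. }
  pose proof (ln_inv_alpha_bounds d Hd k); pose proof (alpha_prod_bounds e He k).
  pose proof (Rabs_pos (alpha_prod d k - alpha_prod e k)).
  pose proof (Rabs_pos (ln (/ alpha d k) - ln (/ alpha e k))).
  pose proof (pos_INR k).
  unfold brjuno_term.
  replace (alpha_prod d k * ln (/ alpha d k) - alpha_prod e k * ln (/ alpha e k)) with
    ((alpha_prod d k - alpha_prod e k) * ln (/ alpha d k)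
     + alpha_prod e k * (ln (/ alpha d k) - ln (/ alpha e k))) by ring.
  eapply Rle_trans; [apply Rabs_triang |].
  rewrite !Rabs_mult, (Rabs_right (ln _)), (Rabs_right (alpha_prod e k)) by lra.
  assert (Rabs (alpha_prod d k - alpha_prod e k) * ln (/ alpha d k)
            <= INR k * eta * INR (d k)) by (apply Rmult_le_compat; lra).
  assert (alpha_prod e k * Rabs (ln (/ alpha d k) - ln (/ alpha e k))
            <= eta * (INR (d k) + 1)) by (rewrite <- (Rmult_1_l (eta * _)); apply Rmult_le_compat; lra).
  lra.
Qed.

Lemma Series_remove_term (u : nat -> R) (p : nat) :
  ex_series u -> Series (fun k => if Nat.eqb k p then 0 else u k) = Series u - u p.
Proof.
  intro Hu; set (v := fun k => if Nat.eqb k p then 0 else u k).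
  assert (Htail : forall k, v (S p + k)%nat = u (S p + k)%nat)
    by (intro k; unfold v; destruct (Nat.eqb_spec (S p + k) p); [lia | auto]).
  assert (Hv : ex_series v).
  { apply (ex_series_incr_n v (S p)), (ex_series_ext (fun k => u (S p + k)%nat)).
    - intro k; symmetry; apply Htail.
    - apply (ex_series_incr_n u (S p)), Hu. }
  rewrite (Series_incr_n v (S p)), (Series_incr_n u (S p)) by (auto; lia); simpl pred.
  rewrite (Series_ext _ _ Htail).
  assert (Hhead : sum_f_R0 v p = sum_f_R0 u p - u p).
  { destruct p as [|q]; simpl; unfold v; [rewrite Nat.eqb_refl; ring |].
    rewrite Nat.eqb_refl, (sum_eq _ u); [ring |].
    intros i Hi; destruct (Nat.eqb_spec i (S q)); [lia | auto]. }
  rewrite Hhead; ring.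
Qed.

Lemma Series_abs_le_head_tail (w : nat -> R) (K : nat) (eta c r : R) :
  0 <= r < 1 ->
  (forall k, (k <= K)%nat -> Rabs (w k) <= eta) ->
  (forall k, (K < k)%nat -> Rabs (w k) <= c * r ^ k) ->
  Rabs (Series w) <= INR (S K) * eta + c * r ^ S K / (1 - r).
Proof.
  intros Hr Hhead Htail.
  set (g := fun k => c * r ^ S K * r ^ k).
  assert (Hg : ex_series g)
    by (apply (ex_series_scal_l (V := R_NormedModule)), ex_series_geom;
        rewrite Rabs_right; lra).
  assert (Hwg : forall k, Rabs (w (S K + k)%nat) <= g k)
    by (intro k; unfold g; rewrite Rmult_assoc, <- pow_add; apply Htail; lia).
  assert (Habs : ex_series (fun k => Rabs (w (S K + k)%nat))).
  { apply (ex_series_le (V := R_CompleteNormedModule) _ g); auto.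
    intro k; change (norm (Rabs (w (S K + k)%nat))) with (Rabs (Rabs (w (S K + k)%nat))).
    rewrite Rabs_Rabsolu; apply Hwg. }
  assert (Hw : ex_series w)
    by (apply (ex_series_incr_n w (S K)), ex_series_Rabs, Habs).
  rewrite (Series_incr_n w (S K)) by (auto; lia); simpl pred.
  eapply Rle_trans; [apply Rabs_triang | apply Rplus_le_compat].
  - eapply Rle_trans; [apply Rabs_triang_gen |].
    rewrite Rmult_comm, <- sum_cte; apply sum_Rle; auto.
  - eapply Rle_trans; [apply Series_Rabs, Habs |].
    replace (c * r ^ S K / (1 - r)) with (Series g).
    + apply Series_le; auto; intro k; split; [apply Rabs_pos | apply Hwg].
    + unfold g; rewrite Series_scal_l, Series_geom by (rewrite Rabs_right; lra).
      field; lra.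
Qed.

Lemma PhiMinus_sub (p : nat) (d e : nat -> nat) :
  ex_series (brjuno_term d) -> ex_series (brjuno_term e) ->
  PhiMinus p d - PhiMinus p e
    = Series (fun k => if Nat.eqb k p then 0 else brjuno_term d k - brjuno_term e k).
Proof.
  intros Hd He.
  rewrite (Series_remove_term (fun k => brjuno_term d k - brjuno_term e k))
    by exact (ex_series_minus (V := R_NormedModule) _ _ Hd He).
  rewrite Series_minus by auto.
  unfold PhiMinus, Phi, brjuno_term; ring.
Qed.

Lemma pow_eventually_lt (x eps : R) :
  0 <= x < 1 -> 0 < eps -> exists N, forall k, (N <= k)%nat -> x ^ k < eps.
Proof.
  intros Hx Heps; destruct (pow_lt_1_zero x ltac:(rewrite Rabs_right; lra) eps Heps)
    as [N HN].
  exists N; intros k Hk; specialize (HN k Hk).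
  rewrite Rabs_right in HN by (apply Rle_ge, pow_le; lra); exact HN.
Qed.

Lemma nat_bounded_upto (a : nat -> nat) (n : nat) :
  exists D, forall i, (i <= n)%nat -> (a i <= D)%nat.
Proof.
  induction n as [|n [D HD]].
  - exists (a O); intros i Hi; replace i with O by lia; lia.
  - exists (Nat.max D (a (S n))); intros i Hi.
    destruct (Nat.eq_dec i (S n)) as [-> | Hne]; [lia |].
    specialize (HD i ltac:(lia)); lia.
Qed.

Section BetaN.

Variables (a : nat -> nat) (n m N : nat).
Hypothesis ha : forall i, (i <= n)%nat -> (0 < a i)%nat.

Lemma betaN_positive (M : nat) : (1 <= M)%nat -> positive_digits (betaN a n m M).
Proof.
  intros HM i; unfold betaN.
  destruct (Nat.leb_spec i n); [apply ha; lia |].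
  destruct (Nat.eqb i (n + m)); lia.
Qed.

Lemma betaN_eq_before (i : nat) : (i < n + m)%nat -> betaN a n m N i = betaN a n m 1 i.
Proof.
  intro Hi; unfold betaN; destruct (Nat.leb i n); auto.
  destruct (Nat.eqb_spec i (n + m)); [lia | auto].
Qed.

Lemma betaN_eq_1 (M i : nat) :
  (n < i)%nat -> i <> (n + m)%nat -> betaN a n m M i = 1%nat.
Proof.
  intros Hi Hi'; unfold betaN; destruct (Nat.leb_spec i n); [lia |].
  destruct (Nat.eqb_spec i (n + m)); [lia | auto].
Qed.

Variable D : nat.
Hypothesis hD : forall i, (i <= n)%nat -> (a i <= D)%nat.

Lemma betaN_le (i : nat) : i <> (n + m)%nat -> (betaN a n m N i <= D + 1)%nat.
Proof.
  intro Hi; unfold betaN; destruct (Nat.leb_spec i n); [specialize (hD i); lia |].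
  destruct (Nat.eqb_spec i (n + m)); lia.
Qed.

Hypothesis HN : (1 <= N)%nat.

Lemma ex_series_betaN_term : ex_series (brjuno_term (betaN a n m N)).
Proof.
  apply (ex_series_brjuno_term _ (D + 1 + N)); [apply betaN_positive, HN |].
  intro i; destruct (Nat.eq_dec i (n + m)) as [-> | Hi].
  - unfold betaN; rewrite Nat.eqb_refl.
    destruct (Nat.leb_spec (n + m) n); [specialize (hD (n + m)) |]; lia.
  - pose proof (betaN_le i Hi); lia.
Qed.

Lemma betaN_term_head (K J k : nat) :
  (K + 2 * J < n + m)%nat -> (k <= K)%nat ->
  Rabs (brjuno_term (betaN a n m N) k - brjuno_term (betaN a n m 1) k)
    <= (INR K * INR (D + 1) + INR (D + 1) + 1) * (/ 4) ^ J.
Proof.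
  intros HKJ Hk.
  eapply Rle_trans.
  { apply (brjuno_term_close _ _ k J); try apply betaN_positive; auto.
    intros i Hi; apply betaN_eq_before; lia. }
  apply Rmult_le_compat_r; [apply pow_le; lra |].
  assert (Hdk : INR (betaN a n m N k) <= INR (D + 1)) by (apply le_INR, betaN_le; lia).
  pose proof (le_INR _ _ Hk); pose proof (pos_INR k); pose proof (pos_INR (D + 1)).
  pose proof (pos_INR (betaN a n m N k)); nra.
Qed.

Lemma betaN_term_tail (k : nat) :
  (n < k)%nat -> k <> (n + m)%nat ->
  Rabs (brjuno_term (betaN a n m N) k - brjuno_term (betaN a n m 1) k)
    <= 4 / 3 * (3 / 4) ^ k.
Proof.
  intros Hk Hk'.
  pose proof (brjuno_term_bounds _ k (betaN_positive N HN)) as HtN.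
  pose proof (brjuno_term_bounds _ k (betaN_positive 1 (le_n 1))) as Ht1.
  rewrite betaN_eq_1 in HtN, Ht1 by auto.
  simpl INR in HtN, Ht1; apply Rabs_le; lra.
Qed.

End BetaN.

Theorem mainTheorem6 (a : nat -> nat) (n : nat)
  (ha : forall i, (i <= n)%nat -> (0 < a i)%nat) :
  forall eps : R, 0 < eps ->
  exists m0 : nat, (0 < m0)%nat /\
    forall m N : nat, (m0 <= m)%nat -> (1 <= N)%nat ->
      Rabs (PhiMinus (n + m) (betaN a n m N) - PhiMinus (n + m) (betaN a n m 1))
        < eps / 4.
Proof.
  intros eps Heps.
  destruct (nat_bounded_upto a n) as [D hD].
  (* K and J are chosen so that the head and the tail of the series each
     contribute less than eps / 8. *)
  destruct (pow_eventually_lt (3 / 4) (3 * eps / 128)) as [K0 HK0]; try lra.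
  set (K := (K0 + n)%nat); set (X := INR K * INR (D + 1) + INR (D + 1) + 1).
  assert (HX : 0 < X)
    by (unfold X; pose proof (pos_INR K); pose proof (pos_INR (D + 1)); nra).
  assert (HK : 0 < INR (S K)) by (apply lt_0_INR; lia).
  assert (HKX : 0 < INR (S K) * X) by (apply Rmult_lt_0_compat; lra).
  destruct (pow_eventually_lt (/ 4) (eps / (8 * (INR (S K) * X)))) as [J HJ].
  { lra. } { apply Rdiv_lt_0_compat; lra. }
  exists (S (K + 2 * J)); split; [lia |]; intros m N Hm HN.
  rewrite PhiMinus_sub by (apply (ex_series_betaN_term a n m _ ha D hD); lia).
  eapply Rle_lt_trans.
  { apply (Series_abs_le_head_tail _ K (X * (/ 4) ^ J) (4 / 3) (3 / 4)); [lra | |].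
    - intros k Hk; destruct (Nat.eqb_spec k (n + m)); [lia |].
      apply betaN_term_head; auto; lia.
    - intros k Hk; destruct (Nat.eqb_spec k (n + m)).
      + rewrite Rabs_R0; assert (0 <= (3 / 4) ^ k) by (apply pow_le; lra); lra.
      + apply betaN_term_tail; auto; lia. }
  specialize (HJ J (le_n J)); specialize (HK0 (S K) ltac:(lia)).
  apply (Rmult_lt_compat_l (INR (S K) * X)) in HJ; auto.
  replace (INR (S K) * X * (eps / (8 * (INR (S K) * X)))) with (eps / 8) in HJ
    by (field; lra).
  lra.
Qed.
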